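(* For any ${\cal X}_5$ formula $\varphi$ and any consistent sets of explicit literals $H\subseteq T$: (i) $H\models\varphi^T_+$ if and only if $\langle H,T\rangle\models\varphi$; (ii) $H=\!\!|\;\varphi^T_-$ if and only if $\langle H,T\rangle=\!\!|\;\varphi$.
   Context: Fix a set $\mathit{At}$ of atoms. An explicit literal is $p$ or $\sim p$ for $p\in\mathit{At}$; a set of explicit literals is consistent if it never contains both $p$ and $\sim p$. Formulas: $\varphi ::= p\mid\bot\mid\varphi\wedge\varphi\mid\varphi\vee\varphi\mid\varphi\to\varphi\mid\sim\varphi$; abbreviations $\neg\varphi:=\varphi\to\bot$, $\top:=\neg\bot$. Classical satisfaction/falsification of a formula by a consistent set $T$ of explicit literals: $T\not\models\bot$, $T=\!\!|\;\bot$; $T\models p$ iff $p\in T$, $T=\!\!|\;p$ iff $\sim p\in T$; $\wedge$: satisfied iff both satisfied, falsified iff at least one falsified; $\vee$: satisfied iff at least one satisfied, falsified iff both falsified; $T\models\sim\varphi$ iff $T=\!\!|\;\varphi$, $T=\!\!|\;\sim\varphi$ iff $T\models\varphi$; $T\models\varphi\to\psi$ iff $T\not\models\varphi$ or $T\models\psi$, $T=\!\!|\;\varphi\to\psi$ iff $T\models\varphi$ and $T=\!\!|\;\psi$ (hence $T\models\neg\varphi$ iff $T\not\models\varphi$, $T=\!\!|\;\neg\varphi$ iff $T\models\varphi$). ${\cal X}_5$-interpretations are pairs $\langle H,T\rangle$ of consistent sets of explicit literals with $H\subseteq T$, with satisfaction $\models$ and falsification $=\!\!|\;$: $\langle H,T\rangle\not\models\bot$,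 $\langle H,T\rangle=\!\!|\;\bot$; $\models p$ iff $p\in H$, $=\!\!|\;p$ iff $\sim p\in H$; $\wedge,\vee,\sim$ as in the classical clauses above (with $\langle H,T\rangle$ in place of $T$); $\langle H,T\rangle\models\varphi\to\psi$ iff (i) $\langle H,T\rangle\not\models\varphi$ or $\langle H,T\rangle\models\psi$ and (ii) $\langle T,T\rangle\not\models\varphi$ or $\langle T,T\rangle\models\psi$; $\langle H,T\rangle=\!\!|\;\varphi\to\psi$ iff $\langle T,T\rangle\models\varphi$ and $\langle H,T\rangle=\!\!|\;\psi$. Given $T$, the mutually recursive transformations $\varphi^T_+$ and $\varphi^T_-$ are (with the clauses for $\neg\alpha$ taking priority over those for $\to$): $\varphi^T_+=\bot$ if $T\not\models\varphi$; otherwise ($T\models\varphi$): $p^T_+=p$ for an atom $p$; $(\alpha\otimes\beta)^T_+=\alpha^T_+\otimes\beta^T_+$ for $\otimes\in\{\wedge,\vee\}$; $(\alpha\to\beta)^T_+=\neg(\alpha^T_+)\vee\beta^T_+$; $(\neg\alpha)^T_+=\neg(\alpha^T_+)$; $(\sim\alpha)^T_+=\sim(\alpha^T_-)$. $\varphi^T_-=\top$ if $T$ does not falsify $\varphi$; otherwise ($T=\!\!|\;\varphi$): $p^T_-=p$ for an atom $p$; $\bot^T_-=\bot$; $(\alpha\otimes\beta)^T_-=\alpha^T_-\otimes\beta^T_-$ for $\otimes\in\{\wedge,\vee\}$; $(\alpha\to\beta)^T_-=\beta^T_-$; $(\neg\alpha)^T_-=\bot$; $(\sim\alpha)^T_-=\sim(\alpha^T_+)$.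 In $H\models\varphi^T_+$ and $H=\!\!|\;\varphi^T_-$ the classical satisfaction/falsification above is used. *)

From Stdlib Require Import Bool.

Set Implicit Arguments.

Section X5.
Variable At : Type.

Inductive lit : Type := LPos (p : At) | LNeg (p : At).

Definition litset := lit -> bool.

Definition consistent (T : litset) : Prop :=
  forall p, ~ (T (LPos p) = true /\ T (LNeg p) = true).

Definition subset (H T : litset) : Prop := forall l, H l = true -> T l = true.

Inductive form : Type :=
| Atom (p : At)
| Bot
| And (a b : form)
| Or (a b : form)
| Imp (a b : form)
| Sneg (a : form).

Definition Neg (a : form) : form := Imp a Bot.
Definition Top : form := Neg Bot.

Fixpoint csat (T : litset) (f : form) : bool :=
  match f with
  | Atom p => T (LPos p)
  | Bot => false
  | And a b => csat T a && csat T b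
  | Or a b => csat T a || csat T b
  | Imp a b => negb (csat T a) || csat T b
  | Sneg a => cfal T a
  end
with cfal (T : litset) (f : form) : bool :=
  match f with
  | Atom p => T (LNeg p)
  | Bot => true
  | And a b => cfal T a || cfal T b
  | Or a b => cfal T a && cfal T b
  | Imp a b => csat T a && cfal T b
  | Sneg a => csat T a
  end.

Fixpoint xsat (H T : litset) (f : form) : bool :=
  match f with
  | Atom p => H (LPos p)
  | Bot => false
  | And a b => xsat H T a && xsat H T b
  | Or a b => xsat H T a || xsat H T b
  | Imp a b => (negb (xsat H T a) || xsat H T b)
               && (negb (xsat T T a) || xsat T T b)
  | Sneg a => xfal H T a
  end
with xfal (H T : litset) (f : form) : bool :=
  match f with
  | Atom p => H (LNeg p)
  | Bot => true
  | And a b => xfal H T a || xfal H T b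
  | Or a b => xfal H T a && xfal H T b
  | Imp a b => xsat T T a && xfal H T b
  | Sneg a => xsat H T a
  end.

(* the transformations phi^T_+ and phi^T_- ; the clauses for
   ~alpha := alpha -> Bot take priority over those for -> *)
Fixpoint trp (T : litset) (f : form) : form :=
  if negb (csat T f) then Bot else
  match f with
  | Atom p => Atom p
  | Bot => Bot
  | And a b => And (trp T a) (trp T b)
  | Or a b => Or (trp T a) (trp T b)
  | Imp a Bot => Neg (trp T a)
  | Imp a b => Or (Neg (trp T a)) (trp T b)
  | Sneg a => Sneg (trm T a)
  end
with trm (T : litset) (f : form) : form :=
  if negb (cfal T f) then Top else
  match f with
  | Atom p => Atom p
  | Bot => Bot
  | And a b => And (trm T a) (trm T b)
  | Or a b => Or (trm T a) (trm T b)
  | Imp a Bot => Bot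
  | Imp a b => trm T b
  | Sneg a => Sneg (trp T a)
  end.

End X5.

(** The transformations mirror the X5 clauses connective by connective, except that
    they consult the classical model [T] where the semantics consults the total
    interpretation [<T,T>]. These agree, and by persistence ([<H,T>] satisfies or falsifies
    only what [<T,T>] does) the guard [T |= phi] (resp. [T =| phi]) that sends a formula to
    [Bot] (resp. [Top]) only discards formulas that [<H,T>] cannot satisfy (resp. falsify)
    anyway. The priority of the clauses for [~alpha] over those for [->] is harmless, since
    [alpha -> Bot] and [~alpha \/ Bot] have the same classical meaning. *)

From Stdlib Require Import Bool Setoid.

Set Implicit Arguments.
Unset Strict Implicit.

Section X5Semantics.
Variable At : Type.
Implicit Types (H T : litset At) (f a b : form At).

Lemma x_total_classical T f : xsat T T f = csat T f /\ xfal T T f = cfal T f.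
Proof.
  induction f as [p| |a [Sa Fa] b [Sb Fb]|a [Sa Fa] b [Sb Fb]|a [Sa Fa] b [Sb Fb]|a [Sa Fa]];
    simpl; rewrite ?Sa, ?Fa, ?Sb, ?Fb; auto using andb_diag.
Qed.

Lemma xsat_TT T f : xsat T T f = csat T f.
Proof. exact (proj1 (x_total_classical T f)). Qed.

Lemma xfal_TT T f : xfal T T f = cfal T f.
Proof. exact (proj2 (x_total_classical T f)). Qed.

Lemma xsat_imp H T a b :
  xsat H T (Imp a b) = (negb (xsat H T a) || xsat H T b) && csat T (Imp a b).
Proof. simpl; rewrite !xsat_TT; reflexivity. Qed.

Lemma xfal_imp H T a b : xfal H T (Imp a b) = csat T a && xfal H T b.
Proof. simpl; rewrite xsat_TT; reflexivity. Qed.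

Lemma x_persistence H T f : subset H T ->
  (xsat H T f = true -> xsat T T f = true) /\ (xfal H T f = true -> xfal T T f = true).
Proof.
  intros HT; induction f; simpl; split; intros X;
    repeat rewrite ?andb_true_iff, ?orb_true_iff in *; intuition.
Qed.

Lemma xsat_unsat H T f : subset H T -> csat T f = false -> xsat H T f = false.
Proof.
  intros HT E; apply not_true_iff_false; intros X.
  apply (proj1 (x_persistence f HT)) in X.
  rewrite xsat_TT in X; congruence.
Qed.

Lemma xfal_unfal H T f : subset H T -> cfal T f = false -> xfal H T f = false.
Proof.
  intros HT E; apply not_true_iff_false; intros X.
  apply (proj2 (x_persistence f HT)) in X.
  rewrite xfal_TT in X; congruence.
Qed.

Lemma trp_unsat T f : csat T f = false -> trp T f = Bot At.
Proof. intros E; destruct f; cbn [trp]; rewrite E; reflexivity. Qed.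

Lemma trm_unfal T f : cfal T f = false -> trm T f = Top At.
Proof. intros E; destruct f; cbn [trm]; rewrite E; reflexivity. Qed.

Lemma csat_trp_imp H T a b : csat T (Imp a b) = true ->
  csat H (trp T (Imp a b)) = negb (csat H (trp T a)) || csat H (trp T b).
Proof.
  intros E; destruct b; cbn [trp]; rewrite E; simpl; rewrite ?orb_false_r; reflexivity.
Qed.

Lemma cfal_trm_imp H T a b : cfal T (Imp a b) = true ->
  cfal H (trm T (Imp a b)) = cfal H (trm T b).
Proof. intros E; cbn [trm]; rewrite E; destruct b; reflexivity. Qed.

Lemma csat_trp_guard H T f : subset H T ->
  (csat T f = true -> csat H (trp T f) = xsat H T f) -> csat H (trp T f) = xsat H T f.
Proof.
  intros HT Hsat; destruct (csat T f) eqn:E; auto.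
  rewrite (trp_unsat E), (xsat_unsat HT E); reflexivity.
Qed.

Lemma cfal_trm_guard H T f : subset H T ->
  (cfal T f = true -> cfal H (trm T f) = xfal H T f) -> cfal H (trm T f) = xfal H T f.
Proof.
  intros HT Hfal; destruct (cfal T f) eqn:E; auto.
  rewrite (trm_unfal E), (xfal_unfal HT E); reflexivity.
Qed.

Lemma trp_trm_correct H T f : subset H T ->
  csat H (trp T f) = xsat H T f /\ cfal H (trm T f) = xfal H T f.
Proof.
  intros HT.
  induction f as [p| |a [Sa Fa] b [Sb Fb]|a [Sa Fa] b [Sb Fb]|a [Sa Fa] b [Sb Fb]|a [Sa Fa]];
    (split; [apply csat_trp_guard | apply cfal_trm_guard]); trivial; intros E.
  all: try discriminate E.
  all: try (cbn [trp trm]; rewrite E; simpl; rewrite ?Sa, ?Fa, ?Sb, ?Fb; reflexivity).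
  - rewrite csat_trp_imp, xsat_imp, E, Sa, Sb by exact E.
    apply eq_sym, andb_true_r.
  - rewrite cfal_trm_imp, xfal_imp, Fb by exact E.
    cbn [cfal] in E; apply andb_true_iff in E as [-> _]; reflexivity.
Qed.

End X5Semantics.

Theorem theorem4 (At : Type) (f : form At) (H T : litset At) :
  consistent H -> consistent T -> subset H T ->
  (csat H (trp T f) = xsat H T f) /\ (cfal H (trm T f) = xfal H T f).
Proof.
  intros _ _ HT; exact (trp_trm_correct f HT).
Qed.
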